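(* Let $n\ge 6$ and let $K$ be a $2$-dimensional shifted simplicial complex on vertex set $[n]$ with $K\subseteq \Delta(5,n)$. Then $f_2(K)\le 4f_1(K)-8<4f_1(K)$.
   Context: A simplicial complex on vertex set $[n]=\{1,\dots,n\}$ is a nonempty family of subsets of $[n]$ closed under taking subsets; $f_i(K)$ is the number of its members of cardinality $i+1$. $K$ is shifted if for every $F\in K$, every $i\in F$ and every $j<i$ with $j\notin F$, also $(F\setminus\{i\})\cup\{j\}\in K$. For $m\le n$, $\Delta(m,n)$ denotes the pure $(m-1)$-dimensional simplicial complex on $[n]$ whose maximal simplices are exactly the sets $S\subseteq[n]$ with $|S|=m$ such that for every $k\in[n]$: if $k\notin S$ then $\{k+1,k+2,\dots,m-k+2\}\subseteq S$ (the interval being empty when $k+1>m-k+2$). So $\Delta(5,n)$ has maximal simplices the $5$-sets $S$ with ($1\notin S\Rightarrow\{2,\dots,6\}\subseteq S$), ($2\notin S\Rightarrow \{3,4,5\}\subseteq S$), ($3\notin S\Rightarrow 4\in S$). *)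

(* Vertex set [n] = {1,...,n} is represented by 'I_n,
   the ordinal i : 'I_n standing for the vertex with label i+1
   (so the order on 'I_n is the order on labels). *)
From mathcomp Require Import all_boot all_order.
Set Implicit Arguments. Unset Strict Implicit. Unset Printing Implicit Defensive.

Definition simplicial_complex n (K : {set {set 'I_n}}) : Prop :=
  K != set0 /\ forall F G : {set 'I_n}, F \in K -> G \subset F -> G \in K.

Definition fvec n (K : {set {set 'I_n}}) (i : nat) : nat :=
  #|[set F in K | #|F| == i.+1]|.

Definition has_dim n (K : {set {set 'I_n}}) (d : nat) : Prop :=
  (exists2 F, F \in K & #|F| = d.+1) /\ (forall F, F \in K -> #|F| <= d.+1).

Definition shifted n (K : {set {set 'I_n}}) : Prop :=
  forall (F : {set 'I_n}) (i j : 'I_n),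
    F \in K -> i \in F -> j < i -> j \notin F -> (F :\ i) :|: [set j] \in K.

(* Maximal simplices of Delta(m,n): m-sets S such that for every vertex k
   (label k+1) not in S, every label l with (k+1)+1 <= l <= m-(k+1)+2 is
   (a vertex, i.e. l <= n, and) in S. Labels l are at most m+2. *)
Definition Delta_facet (m n : nat) (S : {set 'I_n}) : bool :=
  (#|S| == m) &&
  [forall k : 'I_n, (k \notin S) ==>
     [forall l : 'I_(m.+3),
        ((k.+2 <= l) && (l <= m + 2 - k.+1)) ==>
          [exists x : 'I_n, (x.+1 == l) && (x \in S)]]].

Definition Delta (m n : nat) : {set {set 'I_n}} :=
  [set F : {set 'I_n} | [exists S : {set 'I_n}, Delta_facet m S && (F \subset S)]].

(* Every facet of Delta(5,n) misses at most one of the vertices 1,2,3,4, so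
   every triangle of K contains one of them.  Deleting from a triangle the
   vertex 1 when present, and otherwise one of 2,3,4, leaves an edge avoiding 1
   which, together with the deleted vertex, determines the triangle; hence
   f_2 <= 4 * #(edges avoiding 1).  Shiftedness puts {1,2,3} in K, so the edges
   12 and 13 are in K, and f_2 <= 4 (f_1 - 2). *)

From mathcomp Require Import all_boot all_order zify.
Set Implicit Arguments. Unset Strict Implicit. Unset Printing Implicit Defensive.

Lemma card_imset2_le (aT1 aT2 rT : finType) (f : aT1 -> aT2 -> rT)
    (A1 : {set aT1}) (A2 : {set aT2}) :
  #|f @2: (A1, A2)| <= #|A1| * #|A2|.
Proof. by rewrite curry_imset2X -cardsX leq_imset_card. Qed.

Lemma card_le_deletion (T : finType) (F E : {set {set T}}) (L : {set T}) :
    (forall G, G \in F -> exists2 x, x \in G & (x \in L) && (G :\ x \in E)) ->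
  #|F| <= #|L| * #|E|.
Proof.
move=> delF; apply: leq_trans (card_imset2_le (fun x e => x |: e) L E).
apply/subset_leq_card/subsetP => G /delF[x xG /andP[xL GxE]].
by rewrite -(setD1K xG); apply: imset2_f.
Qed.

Section InitialSegment.

Variable n : nat.

Definition initial_segment (k : nat) : {set 'I_n} := [set x : 'I_n | x < k].

Lemma card_initial_segment k : k <= n -> #|initial_segment k| = k.
Proof.
move=> le_kn; have widen_inj : injective (widen_ord le_kn).
  by move=> x y /(congr1 val) /= /val_inj.
rewrite -[RHS](card_ord k) -(card_imset _ widen_inj).
apply: eq_card => x; rewrite inE; apply/idP/imsetP => [xk|[y _ ->]].
  by exists (Ordinal xk) => //; apply: val_inj.
exact: (ltn_ord y).
Qed.

Lemma shifted_initial_segment (K : {set {set 'I_n}}) F :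
  shifted K -> F \in K -> initial_segment #|F| \in K.
Proof.
move=> Ksh; move Ek: #|F| => k; set I := initial_segment k.
have le_kn : k <= n by have := max_card (mem F); rewrite card_ord Ek.
(* Induct on the number of vertices of F outside I: shifting one of them into
   a gap of I lowers it by one. *)
move Ed: #|F :\: I| => d; elim: d F Ek Ed => [|d IHd] F cardF dF FK.
  have FI : F \subset I by rewrite -setD_eq0 -cards_eq0 dF.
  suff /eqP <- : F == I by [].
  by rewrite eqEcard FI /I card_initial_segment // cardF leqnn.
have /set0Pn[i] : F :\: I != set0 by rewrite -card_gt0 dF.
rewrite !inE -leqNgt => /andP[ki iF].
have /set0Pn[j] : I :\: F != set0.
  rewrite -card_gt0; have := cardsID F I; have := cardsID I F.
  by rewrite card_initial_segment // setIC; lia.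
rewrite !inE => /andP[jF jk].
have jI : j \in I by rewrite inE.
apply: (IHd ((F :\ i) :|: [set j])).
- by rewrite setUC cardsU1 !inE negb_and jF orbT -cardF (cardsD1 i F) iF.
- suff -> : (F :\ i :|: [set j]) :\: I = (F :\: I) :\ i.
    by move: dF; rewrite (cardsD1 i) !inE iF -leqNgt ki add1n => -[].
  apply/setP => x; rewrite !inE; case: (eqVneq x j) => [->|_].
    by rewrite jk (negbTE jF) !andbF.
  by rewrite orbF andbCA.
- by apply: Ksh => //; lia.
Qed.

End InitialSegment.

Arguments initial_segment {n} k.

Lemma Delta5_facet_gap n (S : {set 'I_n}) (x y : 'I_n) :
  Delta_facet 5 S -> x \notin S -> x < y < 4 -> y \in S.
Proof.
case/andP=> _ /forallP/(_ x)/implyP gapS /gapS /forallP gap /andP[xy y4].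
have y8 : y.+1 < 8 by lia.
have /implyP := gap (Ordinal y8); rewrite /= ltnS xy /=.
case/(_ _)/existsP; first by lia.
by move=> z /andP[/eqP/succn_inj/val_inj-> ].
Qed.

Lemma Delta5_facet_low n (S : {set 'I_n}) :
  4 <= n -> Delta_facet 5 S -> 3 <= #|S :&: initial_segment 4|.
Proof.
move=> n4 facetS; have lowS : #|initial_segment 4 :\: S| <= 1.
  apply/card_le1_eqP => x y; rewrite !inE => /andP[xS x4] /andP[yS y4].
  case: (ltngtP x y) => [xy|yx|/val_inj//].
    by move: yS; rewrite (Delta5_facet_gap facetS xS) // xy.
  by move: xS; rewrite (Delta5_facet_gap facetS yS) // yx.
have := cardsID S (initial_segment 4); rewrite setIC card_initial_segment //.
lia.
Qed.

Lemma Delta5_triangle_low n (F : {set 'I_n}) :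
  4 <= n -> F \in Delta 5 n -> #|F| = 3 -> exists2 x, x \in F & x < 4.
Proof.
move=> n4; rewrite inE => /existsP[S /andP[facetS FS]] cardF.
have S5 : #|S| = 5 by case/andP: facetS => /eqP.
have highF : #|F :\: initial_segment 4| <= #|S :\: initial_segment 4|.
  by apply/subset_leq_card/setSD.
have /set0Pn[x] : F :&: initial_segment 4 != set0.
  rewrite -card_gt0; have := Delta5_facet_low n4 facetS.
  have := cardsID (initial_segment 4) F; have := cardsID (initial_segment 4) S.
  lia.
by rewrite !inE => /andP[xF x4]; exists x.
Qed.

Lemma Delta5_triangle_low_avoiding n (F : {set 'I_n}) (v : 'I_n) :
    4 <= n -> v < 4 -> F \in Delta 5 n -> #|F| = 3 ->
  exists2 x, x \in F & (x < 4) && (v \notin F :\ x).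
Proof.
move=> n4 v4 FD cardF; have [vF|vF] := boolP (v \in F).
  by exists v; rewrite // v4 setD11.
have [x xF x4] := Delta5_triangle_low n4 FD cardF.
by exists x; rewrite // x4 !inE (negbTE vF) andbF.
Qed.

Theorem lemma1p14 (n : nat) (K : {set {set 'I_n}}) :
  6 <= n ->
  simplicial_complex K -> has_dim K 2 -> shifted K ->
  K \subset Delta 5 n ->
  fvec K 2 + 8 <= 4 * fvec K 1 /\ fvec K 2 < 4 * fvec K 1.
Proof.
move=> n6 [_ Kclosed] [[F FK cardF] _] Ksh KD.
pose E := [set e in K | #|e| == 2].
have [n0 n1 n2 n4] : [/\ 0 < n, 1 < n, 2 < n & 4 <= n] by split; lia.
pose v0 := Ordinal n0; pose v1 := Ordinal n1; pose v2 := Ordinal n2.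
pose star0 := [set e : {set 'I_n} | v0 \in e].
have starE : 2 <= #|E :&: star0|.
  have I3K : initial_segment 3 \in K by rewrite -cardF shifted_initial_segment.
  have edgeE (v : 'I_n) (v3 : v < 3) (v0v : v0 != v) : [set v0; v] \in E :&: star0.
    rewrite !inE eqxx cards2 v0v !andbT; apply: Kclosed I3K _.
    by apply/subsetP => x /set2P[]->; rewrite inE.
  apply/card_gt1P; exists [set v0; v1], [set v0; v2].
  split; [exact: edgeE | exact: edgeE |].
  by apply/eqP => /setP/(_ v2); rewrite !inE eqxx.
have TE : fvec K 2 <= 4 * #|E :\: star0|.
  rewrite -[4](@card_initial_segment n) //.
  apply: card_le_deletion => G; rewrite inE => /andP[GK /eqP cardG].
  have [x xG /andP[x4 v0Gx]] :=
    Delta5_triangle_low_avoiding n4 (isT : v0 < 4) (subsetP KD G GK) cardG.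
  exists x => //; rewrite !inE x4 -in_setD1 v0Gx (Kclosed G) ?subD1set //=.
  by move: cardG; rewrite (cardsD1 x) xG add1n => -[->].
have cardE : fvec K 1 = #|E :&: star0| + #|E :\: star0| := esym (cardsID star0 E).
lia.
Qed.
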